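(* In the setting described in the context, suppose C(v), C(vi) and (U) hold. Then for any sequence of random variables $\{\alpha_n\}$ with $\alpha_n\xrightarrow{P}\alpha$ as $n\to\infty$, $d_H\big(D_n(\alpha_n\mid\mathbf{x}),D(\alpha\mid\mathbf{x})\big)\xrightarrow{P}0$ as $n\to\infty$.
   Context: Setting: $\mathbf{Y}$ is a random vector in $\mathbb{R}^p$ and $\mathbf{X}$ a random element of a complete separable metric space $\mathcal{C}$; $(\mathbf{X}_i,\mathbf{Y}_i)$ are i.i.d. copies; $\mu(\cdot\mid\mathbf{x})$ is the conditional distribution of $\mathbf{Y}$ given $\mathbf{X}=\mathbf{x}$ for a fixed $\mathbf{x}$, and $\mu_n(B\mid\mathbf{x})=\sum_{i=1}^nI(\mathbf{Y}_i\in B)W_{i,n}(\mathbf{x})$ with nonnegative weights summing to $1$ that are measurable functions of $\mathbf{X}_1,\dots,\mathbf{X}_n$. $\rho(\cdot\mid\mathbf{x})$ is a uniformly bounded conditional depth function associated with $\mu(\cdot\mid\mathbf{x})$, $\rho_n(\cdot\mid\mathbf{x})$ its sample version defined from $\mu_n(\cdot\mid\mathbf{x})$; $D(\alpha\mid\mathbf{x})=\{\mathbf{y}:\rho(\mathbf{y}\mid\mathbf{x})\ge\alpha\}$, $D_n(\alpha\mid\mathbf{x})=\{\mathbf{y}:\rho_n(\mathbf{y}\mid\mathbf{x})\ge\alpha\}$. A conditional median $\mathbf{m}(\mathbf{x})$ maximizes $\rho(\cdot\mid\mathbf{x})$. $d_H(A,B)=\inf\{\epsilon:A\subseteq B^\epsilon,B\subseteq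 A^\epsilon\}$ is the Hausdorff distance, $A^\epsilon$ the $\epsilon$-neighborhood of $A$. Conditions: (U) $\sup_{\mathbf{y}}|\rho_n(\mathbf{y}\mid\mathbf{x})-\rho(\mathbf{y}\mid\mathbf{x})|\xrightarrow{P}0$. C(v): $\rho(\cdot\mid\mathbf{x})$ is continuous and $\rho(\mathbf{y}\mid\mathbf{x})\to0$ as $\|\mathbf{y}\|\to\infty$. C(vi): for any $0<\alpha<\rho(\mathbf{m}(\mathbf{x})\mid\mathbf{x})$, the closure of $\{\mathbf{y}:\rho(\mathbf{y}\mid\mathbf{x})>\alpha\}$ equals $D(\alpha\mid\mathbf{x})$. *)

From HB Require Import structures.
From mathcomp Require Import all_boot all_order all_algebra.
From mathcomp Require Import all_classical all_reals all_analysis.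
Set Implicit Arguments. Unset Strict Implicit. Unset Printing Implicit Defensive.
Import Order.TTheory GRing.Theory Num.Theory.
Import numFieldNormedType.Exports.
Local Open Scope classical_set_scope.
Local Open Scope ring_scope.

Definition enorm (R : realType) (p : nat) (v : 'rV[R]_p) : R :=
  Num.sqrt (\sum_(i < p) v ord0 i ^+ 2).

Definition eps_nbhd (R : realType) (p : nat) (A : set 'rV[R]_p) (eps : R)
  : set 'rV[R]_p :=
  [set y | exists2 a, A a & enorm (y - a) < eps].

(* Hausdorff distance d_H(A,B) = inf {eps > 0 : A ⊆ B^eps, B ⊆ A^eps},
   extended-real valued (+oo when no such eps exists). *)
Definition hausdorff (R : realType) (p : nat) (A B : set 'rV[R]_p) : \bar R :=
  ereal_inf [set eps%:E | eps in
    [set eps : R | 0 < eps /\ A `<=` eps_nbhd B eps /\ B `<=` eps_nbhd A eps]].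

Definition level_set (R : realType) (p : nat) (rho : 'rV[R]_p -> R) (alpha : R)
  : set 'rV[R]_p := [set y | alpha <= rho y].

(* Outer probability P*(A) = inf {P(B) : B measurable, A ⊆ B}; it coincides
   with P on measurable events. *)
Definition outer_prob d (T : measurableType d) (R : realType)
  (P : probability T R) (A : set T) : \bar R :=
  ereal_inf [set P B | B in [set B | measurable B /\ A `<=` B]].

Definition cvg_in_prob d (T : measurableType d) (R : realType)
  (P : probability T R) (X : nat -> T -> R) (Y : T -> R) : Prop :=
  forall eps : R, 0 < eps ->
    (fun n => outer_prob P [set w | eps < `|X n w - Y w|]) @ \oo --> 0%E.

Definition cvg_in_prob0 d (T : measurableType d) (R : realType)
  (P : probability T R) (Z : nat -> T -> \bar R) : Prop :=
  forall eps : R, 0 < eps ->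
    (fun n => outer_prob P [set w | (eps%:E < Z n w)%E]) @ \oo --> 0%E.

Definition sup_dev (R : realType) (p : nat) (f g : 'rV[R]_p -> R) : \bar R :=
  ereal_sup [set (`|f y - g y|)%:E | y in [set: 'rV[R]_p]].

From HB Require Import structures.
From mathcomp Require Import all_boot all_order all_algebra.
From mathcomp Require Import all_classical all_reals all_analysis.
From mathcomp Require Import finmap lra zify.
Set Implicit Arguments. Unset Strict Implicit. Unset Printing Implicit Defensive.
Import Order.TTheory GRing.Theory Num.Theory.
Import numFieldNormedType.Exports.
Local Open Scope classical_set_scope.
Local Open Scope ring_scope.

(* Under C(v) every level set D(c) with c > 0 is compact, and compactness makes
   D(.) continuous in the Hausdorff distance at alpha: for every r > 0 there is
   eta > 0 such that D(alpha - eta) lies within r of D(alpha) (on the compact set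
   of points of D(alpha/2) at distance >= r from D(alpha), rho stays below alpha,
   hence below alpha - eta), and D(alpha) lies within r of D(alpha + eta)
   (by C(vi), finitely many balls centred in {rho > alpha} cover D(alpha)).
   Once sup |rho_n - rho| and |alpha_n - alpha| are at most eta/2, D_n(alpha_n)
   is squeezed between D(alpha + eta) and D(alpha - eta), so d_H <= r; the outer
   probability of the opposite event is at most the sum of two probabilities
   that tend to 0. *)

Section EuclideanNorm.
Context (R : realType) (p : nat).
Implicit Types (v : 'rV[R]_p).

Lemma mx_norm_entry_le v i : `|v ord0 i| <= `|v|.
Proof.
rewrite [leRHS]/Num.norm /= mx_normrE.
exact: (le_bigmax 0 (fun ij : 'I_1 * 'I_p => `|v ij.1 ij.2|) (ord0, i)).
Qed.

Lemma mx_norm_le_enorm v : `|v| <= enorm v.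
Proof.
rewrite [leLHS]/Num.norm /= mx_normrE; apply: bigmax_le => [|[i j] _ /=].
  exact: sqrtr_ge0.
rewrite (ord1 i) -sqrtr_sqr ler_sqrt; last by apply: sumr_ge0 => k _; rewrite sqr_ge0.
by rewrite (bigD1 j) //= lerDl; apply: sumr_ge0 => k _; rewrite sqr_ge0.
Qed.

Lemma enorm_lt_of_mx_norm v (e : R) : 0 < e -> `|v| < e / p.+1%:R -> enorm v < e.
Proof.
move=> e_gt0 v_lt; have p1_gt0 : 0 < p.+1%:R :> R by rewrite ltr0n.
have sum_le : \sum_(i < p) v ord0 i ^+ 2 <= p%:R * `|v| ^+ 2.
  apply: (@le_trans _ _ (\sum_(i < p) `|v| ^+ 2)); last first.
    by rewrite sumr_const card_ord mulr_natl.
  apply: ler_sum => i _.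
  by rewrite -real_normK ?num_real // lerXn2r ?nnegrE ?mx_norm_entry_le.
have sq_lt : `|v| ^+ 2 <= (e / p.+1%:R) ^+ 2.
  by rewrite lerXn2r ?nnegrE ?normr_ge0 ?ltW // divr_gt0.
rewrite /enorm -(ger0_norm (ltW e_gt0)) -sqrtr_sqr ltr_sqrt ?exprn_gt0 //.
apply: (le_lt_trans sum_le); apply: (le_lt_trans (ler_wpM2l (ler0n _ _) sq_lt)).
rewrite expr_div_n mulrA ltr_pdivrMr ?exprn_gt0 // mulrC ltr_pM2l ?exprn_gt0 //.
by rewrite -natrX ltr_nat; lia.
Qed.

End EuclideanNorm.

Lemma seq_pos_lbound (R : realDomainType) (I : eqType) (s : seq I) (g : I -> R) :
  (forall i, i \in s -> 0 < g i) ->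
  exists2 eta, 0 < eta & forall i, i \in s -> eta <= g i.
Proof.
elim: s => [|x s IH] g_gt0; first by exists 1.
have [e e_gt0 le_e] := IH (fun i si => g_gt0 i (@mem_behead _ (x :: s) i si)).
have gx_gt0 := g_gt0 x (mem_head x s).
exists (Num.min (g x) e) => [|i]; first by rewrite lt_min gx_gt0 e_gt0.
by rewrite in_cons => /predU1P [->|/le_e]; rewrite ge_min ?lexx // => ->; rewrite orbT.
Qed.

Lemma compact_lt_bound (R : realType) (T : ptopologicalType) (f : T -> R)
    (K : set T) (a : R) :
  continuous f -> compact K -> (forall y, K y -> f y < a) ->
  exists2 eta, 0 < eta & forall y, K y -> f y < a - eta.
Proof.
move=> f_cont + f_lt_a; rewrite compact_cover.
move=> /(_ _ [set e : R | 0 < e] (fun e => [set y | f y < a - e])) [].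
- move=> e _; apply: (@open_comp _ _ f [set x | x < a - e]) => [y _|].
    exact: f_cont.
  exact: open_lt.
- move=> y Ky; exists ((a - f y) / 2) => /=; first by rewrite divr_gt0 // subr_gt0 f_lt_a.
  by have := f_lt_a y Ky; have := splitr (a - f y); lra.
move=> E E_gt0 cover_K.
have [eta eta_gt0 le_eta] : exists2 eta : R, 0 < eta & forall e : R, e \in E -> eta <= e.
  by apply: seq_pos_lbound => e /E_gt0; rewrite in_setE.
exists eta => // y /cover_K [e /le_eta /=]; lra.
Qed.

Section LevelSets.
Context (R : realType) (p : nat).
Implicit Types (f g : 'rV[R]_p -> R) (A B : set 'rV[R]_p).

Lemma level_set_anti f a b : a <= b -> level_set f b `<=` level_set f a.
Proof. by move=> ab y /= /(le_trans ab). Qed.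

Lemma level_set_sub_shift f g dl a : (forall y, `|f y - g y| <= dl) ->
  level_set f a `<=` level_set g (a - dl).
Proof.
move=> fg y; rewrite /level_set /= => ay.
by have := fg y; rewrite ler_norml => /andP[]; lra.
Qed.

Lemma eps_nbhdS A B e : A `<=` B -> eps_nbhd A e `<=` eps_nbhd B e.
Proof. by move=> AB y [a /AB Ba ya]; exists a. Qed.

Lemma hausdorff_le A B e : 0 < e ->
  A `<=` eps_nbhd B e -> B `<=` eps_nbhd A e -> (hausdorff A B <= e%:E)%E.
Proof. by move=> e_gt0 AB BA; apply: ereal_inf_lbound; exists e. Qed.

Lemma sup_dev_ub f g y : (`|f y - g y|%:E <= sup_dev f g)%E.
Proof. by apply: ereal_sup_ubound; exists y. Qed.

Variable rho : 'rV[R]_p -> R.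
Hypothesis rho_cont : continuous rho.
Hypothesis rho_vanish :
  forall e : R, 0 < e -> exists K : R, forall y, K < enorm y -> `|rho y| < e.

Lemma level_set_bounded c : 0 < c -> bounded_set (level_set rho c).
Proof.
move=> c_gt0; have [K rho_small] := rho_vanish c_gt0.
exists K; split; first exact: num_real.
move=> M KM y /= cy; apply: le_trans (mx_norm_le_enorm y) _.
apply/ltW/(le_lt_trans _ KM); rewrite leNgt; apply/negP => /rho_small.
by apply/negP; rewrite -leNgt (le_trans cy) ?ler_norm.
Qed.

Lemma closed_level_set c : closed (level_set rho c).
Proof.
apply: (@preimage_closed _ _ rho [set x | c <= x]); last exact: closed_ge.
by move=> y _; apply: rho_cont.
Qed.

Lemma compact_level_set c : 0 < c -> compact (level_set rho c).
Proof.
move=> c_gt0; apply: bounded_closed_compact; last exact: closed_level_set.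
exact: level_set_bounded.
Qed.

Lemma level_set_sub_nbhd_higher alpha r : 0 < alpha -> 0 < r ->
  closure [set y | alpha < rho y] = level_set rho alpha ->
  exists2 eta, 0 < eta &
    level_set rho alpha `<=` eps_nbhd (level_set rho (alpha + eta)) r.
Proof.
move=> alpha_gt0 r_gt0 D_closure.
have r'_gt0 : 0 < r / p.+1%:R by rewrite divr_gt0 ?ltr0n.
have := compact_level_set alpha_gt0; rewrite compact_cover.
move=> /(_ _ [set z | alpha < rho z] (ball ^~ (r / p.+1%:R))) [].
- by move=> z _; apply: ball_open.
- move=> y; rewrite -D_closure => /(_ _ (@nbhsx_ballx _ _ y _ r'_gt0)) [z [zD yz]].
  by exists z => //; apply: ball_sym.
move=> Z Z_sub cover_D.
have [eta eta_gt0 le_eta] :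
    exists2 eta, 0 < eta & forall z, z \in Z -> eta <= rho z - alpha.
  by apply: seq_pos_lbound => z /Z_sub; rewrite in_setE subr_gt0.
exists eta => // y /cover_D [z Zz]; rewrite -ball_normE /= => zy.
exists z; first by have := le_eta z Zz; rewrite /level_set /=; lra.
by apply: enorm_lt_of_mx_norm; rewrite // distrC.
Qed.

Lemma lower_level_set_sub_nbhd alpha r : 0 < alpha -> 0 < r ->
  exists2 eta, 0 < eta &
    level_set rho (alpha - eta) `<=` eps_nbhd (level_set rho alpha) r.
Proof.
move=> alpha_gt0 r_gt0; pose r' := r / p.+1%:R.
pose N := [set y | exists2 a, alpha <= rho a & `|y - a| < r'].
have N_open : open N.
  rewrite openE => y [a a_ge ya]; have s_gt0 : 0 < r' - `|y - a| by rewrite subr_gt0.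
  apply: filterS (@nbhsx_ballx _ _ y _ s_gt0) => z; rewrite -ball_normE /= => yz.
  by exists a => //; have := ler_distD y z a; rewrite (distrC z y); lra.
pose S := level_set rho (alpha / 2) `&` ~` N.
have S_compact : compact S.
  have half_gt0 : 0 < alpha / 2 by rewrite divr_gt0.
  exact: compact_closedI (compact_level_set half_gt0) (open_closedC N_open).
have S_lt_alpha y : S y -> rho y < alpha.
  move=> [_ Ny]; rewrite ltNge; apply/negP => ay; apply: Ny.
  by exists y; rewrite // subrr normr0 divr_gt0 ?ltr0n.
have [eta eta_gt0 S_lt] := compact_lt_bound rho_cont S_compact S_lt_alpha.
exists (Num.min eta (alpha / 2)); first by rewrite lt_min eta_gt0 divr_gt0.
move=> y; rewrite /level_set /= => y_ge; have [[a a_ge ya]|Ny] := pselect (N y).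
  by exists a => //; apply: enorm_lt_of_mx_norm.
have min_le_eta : Num.min eta (alpha / 2) <= eta by rewrite ge_min lexx.
have min_le_half : Num.min eta (alpha / 2) <= alpha / 2 by rewrite ge_min lexx orbT.
have Sy : S y by split => //; rewrite /level_set /=; lra.
by have := S_lt y Sy; lra.
Qed.

Lemma hausdorff_level_set_stable alpha eps : 0 < alpha ->
  closure [set y | alpha < rho y] = level_set rho alpha -> 0 < eps ->
  exists2 dl, 0 < dl & forall f a, (forall y, `|f y - rho y| <= dl) ->
    `|a - alpha| <= dl ->
    (hausdorff (level_set f a) (level_set rho alpha) <= eps%:E)%E.
Proof.
move=> alpha_gt0 D_closure eps_gt0.
have [ea ea_gt0 lower_sub] := lower_level_set_sub_nbhd alpha_gt0 eps_gt0.
have [eb eb_gt0 D_sub] := level_set_sub_nbhd_higher alpha_gt0 eps_gt0 D_closure.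
pose dl := Num.min ea eb / 2.
have min_le_ea : Num.min ea eb <= ea by rewrite ge_min lexx.
have min_le_eb : Num.min ea eb <= eb by rewrite ge_min lexx orbT.
have dl_gt0 : 0 < dl by rewrite divr_gt0 // lt_min ea_gt0 eb_gt0.
have dl2 : dl + dl = Num.min ea eb by rewrite /dl -splitr.
exists dl => // f a f_near; rewrite ler_norml => /andP[a_ge a_le].
apply: hausdorff_le => //.
- apply: subset_trans lower_sub.
  apply: subset_trans (level_set_sub_shift f_near) (level_set_anti _).
  lra.
- apply: subset_trans D_sub (eps_nbhdS _).
  have rho_near y : `|rho y - f y| <= dl by rewrite distrC.
  apply: subset_trans (level_set_sub_shift rho_near) (level_set_anti _).
  lra.
Qed.

End LevelSets.

Section OuterProbability.
Context d (T : measurableType d) (R : realType) (P : probability T R).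
Local Open Scope ereal_scope.

Lemma outer_prob_ge0 A : 0 <= outer_prob P A.
Proof. by apply: le_ereal_inf_tmp => _ [B [mB _] <-]; exact: measure_ge0. Qed.

Lemma outer_prob_fin_num A : outer_prob P A \is a fin_num.
Proof.
rewrite ge0_fin_numE ?outer_prob_ge0 //; apply: (@le_lt_trans _ _ (P setT)).
  by apply: ereal_inf_lbound; exists setT.
by rewrite probability_setT ltry.
Qed.

Lemma outer_prob_le_cover A B C : A `<=` B `|` C ->
  outer_prob P A <= outer_prob P B + outer_prob P C.
Proof.
move=> ABC; apply/lee_addgt0Pr => e e_gt0.
have half_gt0 : 0 < (e / 2)%:E by rewrite lte_fin divr_gt0.
have approx X : exists2 X', measurable X' /\ X `<=` X' &
    P X' < outer_prob P X + (e / 2)%:E.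
  have [_ [X' X'_cover <-] ltX'] := ereal_inf_lt
    (lte_spaddre (outer_prob_fin_num X) half_gt0 (lexx _)).
  by exists X'.
have [B' [mB' BB'] ltB'] := approx B.
have [C' [mC' CC'] ltC'] := approx C.
apply: (@le_trans _ _ (P (B' `|` C'))).
  apply: ereal_inf_lbound; exists (B' `|` C') => //; split; first exact: measurableU.
  by move=> x /ABC [/BB'|/CC'] ?; [left|right].
apply: le_trans (measureU2 _ mB' mC') _; apply: le_trans (leeD (ltW ltB') (ltW ltC')) _.
rewrite -(fineK (outer_prob_fin_num B)) -(fineK (outer_prob_fin_num C)) -!EFinD lee_fin.
by have := splitr e; lra.
Qed.

Lemma outer_prob_cvg0_cover (As Bs Cs : nat -> set T) :
  (fun n => outer_prob P (Bs n)) @ \oo --> 0 ->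
  (fun n => outer_prob P (Cs n)) @ \oo --> 0 ->
  (forall n, As n `<=` Bs n `|` Cs n) ->
  (fun n => outer_prob P (As n)) @ \oo --> 0.
Proof.
move=> B0 C0 ABC; apply: (@squeeze_cvge _ _ _ _ (fun=> 0) _
  (fun n => outer_prob P (Bs n) + outer_prob P (Cs n))).
- by near=> n; rewrite outer_prob_ge0 outer_prob_le_cover.
- exact: cvg_cst.
- by rewrite -(adde0 0); apply: cvgeD.
Unshelve. all: by end_near.
Qed.

End OuterProbability.

Theorem lemma6 (d : measure_display) (Omega : measurableType d) (R : realType)
  (P : probability Omega R) (p : nat)
  (rho : 'rV[R]_p -> R)                       (* rho(. | x), x fixed *)
  (rhon : nat -> Omega -> 'rV[R]_p -> R)      (* rho_n(. | x), random *)
  (m : 'rV[R]_p)                              (* conditional median m(x) *)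
  (alpha : R) (alphan : nat -> Omega -> R) :
  (* rho is uniformly bounded *)
  (exists M : R, forall y, `|rho y| <= M) ->
  (* m(x) maximizes rho(. | x) *)
  (forall y, rho y <= rho m) ->
  (* C(v) *)
  continuous rho ->
  (forall e : R, 0 < e -> exists K : R, forall y, K < enorm y -> `|rho y| < e) ->
  (* C(vi) *)
  (forall a : R, 0 < a < rho m ->
     closure [set y | a < rho y] = level_set rho a) ->
  (* (U) *)
  cvg_in_prob0 P (fun n w => sup_dev (rhon n w) rho) ->
  (* alpha_n are random variables converging in probability to alpha *)
  (forall n, measurable_fun [set: Omega] (alphan n)) ->
  cvg_in_prob P alphan (fun _ => alpha) ->
  0 < alpha < rho m ->
  cvg_in_prob0 P
    (fun n w => hausdorff (level_set (rhon n w) (alphan n w)) (level_set rho alpha)).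
Proof.
move=> _ _ rho_cont rho_vanish D_closure dev_cvg _ alphan_cvg alpha_range.
move=> eps eps_gt0; have /andP[alpha_gt0 _] := alpha_range.
have [dl dl_gt0 stable] := hausdorff_level_set_stable rho_cont rho_vanish alpha_gt0
  (D_closure alpha alpha_range) eps_gt0.
apply: (outer_prob_cvg0_cover (dev_cvg dl dl_gt0) (alphan_cvg dl dl_gt0)) => n w /=.
apply: contraPP => /not_orP[/negP dev_le /negP alpha_le].
rewrite -leNgt in dev_le; rewrite -leNgt in alpha_le.
apply/negP; rewrite -leNgt; apply: stable alpha_le => y.
by rewrite -lee_fin (le_trans (sup_dev_ub _ _ y)).
Qed.
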